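(* Let $\mathbf{x},\mathbf{v}$ be random variables, $\mathrm{t}\in\{0,1\}$ a treatment and $\mathbf{y}(t)$ the potential outcomes. Suppose $\mathbf{x}$ is a balancing covariate of $\mathbf{v}$, i.e. $\mathrm{t}\perp\mathbf{v}\mid\mathbf{x}$. If $\mathbf{v}$ satisfies exchangeability ($\mathbf{y}(t)\perp\mathrm{t}\mid\mathbf{v}$) and $\mathbf{y}(t)\perp\mathbf{x}\mid\mathbf{v},\mathrm{t}$, then $\mathbf{x}$ satisfies exchangeability, i.e. $\mathbf{y}(t)\perp\mathrm{t}\mid\mathbf{x}$.
   Context: Potential outcomes framework with binary treatment $\mathrm{t}$ and potential outcomes $\mathbf{y}(0),\mathbf{y}(1)$; statements involving $t$ without quantification are meant for both $t\in\{0,1\}$. *)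

From HB Require Import structures.
From mathcomp Require Import all_boot all_order all_algebra.
From mathcomp Require Import all_classical all_reals all_analysis.
Set Implicit Arguments. Unset Strict Implicit. Unset Printing Implicit Defensive.
Import Order.TTheory GRing.Theory Num.Theory.
Local Open Scope classical_set_scope.
Local Open Scope ring_scope.

(* Conditional independence  X _||_ Y | Z  on a probability space (T, P):
   for every measurable event A of X there is a version g(Z) of the
   conditional probability P(X \in A | Z), i.e. a measurable g with values
   in [0,1], which is also a version of P(X \in A | Y, Z); the latter is
   expressed by the defining property of conditional probability on the
   generating pi-system {Y \in B, Z \in C} of sigma(Y, Z):
     P(X \in A, Y \in B, Z \in C) = \int_{Y \in B, Z \in C} g(Z) dP. *)
Definition cond_indep (R : realType) (d : measure_display) (T : measurableType d)
    (P : probability T R)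
    (dX dY dZ : measure_display) (TX : measurableType dX)
    (TY : measurableType dY) (TZ : measurableType dZ)
    (X : T -> TX) (Y : T -> TY) (Z : T -> TZ) : Prop :=
  forall A : set TX, measurable A ->
    exists g : TZ -> R,
      [/\ measurable_fun setT g,
          (forall z, 0 <= g z <= 1) &
          forall (B : set TY) (C : set TZ), measurable B -> measurable C ->
            P (X @^-1` A `&` Y @^-1` B `&` Z @^-1` C) =
            (\int[P]_(w in Y @^-1` B `&` Z @^-1` C) (g (Z w))%:E)%E].

From HB Require Import structures.
From mathcomp Require Import all_boot all_order all_algebra.
From mathcomp Require Import all_classical all_reals all_analysis.
From mathcomp Require Import measurable_realfun ring.

(** Fix [s] and an event [A] of [y s], and let [f v] be a version of
    [P(y s \in A | v)].  Since [t] is boolean, exchangeability of [v] makes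
    [f v] a version of [P(y s \in A | v, t)] as well, hence [f v] agrees a.s.
    with the version given by [y s _||_ x | (v, t)], and so
    [P(y s \in A, t \in B, x \in C) = E[1_B(t) 1_C(x) f(v)]].  Let [g x] be
    the conditional expectation of [f v] given [x] and [h x] a version of
    [P(t \in B | v, x)]; then [t _||_ v | x] and the tower property give
    [E[1_B(t) 1_C(x) f(v)] = E[h(x) 1_C(x) f(v)] = E[h(x) 1_C(x) g(x)]
      = E[1_B(t) 1_C(x) g(x)]],
    i.e. [g x] is a version of [P(y s \in A | t, x)]. *)

Set Implicit Arguments. Unset Strict Implicit. Unset Printing Implicit Defensive.
Import Order.TTheory GRing.Theory Num.Theory.
Import HBNNSimple.
Local Open Scope classical_set_scope.
Local Open Scope ring_scope.

Lemma measurable_preimageT d d' (T : measurableType d) (U : measurableType d')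
    (f : T -> U) (A : set U) :
  measurable_fun setT f -> measurable A -> measurable (f @^-1` A).
Proof. by move=> mf mA; rewrite -[_ @^-1` _]setTI; exact: mf. Qed.

Lemma integral_mkcond_indic (R : realType) d (T : measurableType d)
    (mu : {measure set T -> \bar R}) (S : set T) (F : T -> R) :
  (\int[mu]_(w in S) (F w)%:E = \int[mu]_w (F w * \1_S w)%:E)%E.
Proof.
by rewrite integral_mkcond epatch_indic; apply: eq_integral => w _; rewrite /= EFinM.
Qed.

Section eq_integral_compM.
Local Open Scope ereal_scope.
Context (R : realType) d (T : measurableType d) (mu : {measure set T -> \bar R}).
Context dz (TZ : measurableType dz) (Z : T -> TZ) (mZ : measurable_fun setT Z).

Let integral_nnsfun_compM (h : {nnsfun TZ >-> R}) (c : T -> R) :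
  measurable_fun setT c -> (forall w, 0 <= c w)%R ->
  \int[mu]_w (h (Z w) * c w)%:E =
  \sum_(r \in range h) r%:E * \int[mu]_(w in Z @^-1` (h @^-1` [set r])) (c w)%:E.
Proof.
move=> mc c0.
transitivity (\int[mu]_w \sum_(r \in range h)
    (r%:E * (\1_(h @^-1` [set r]) (Z w))%:E * (c w)%:E)).
  apply: eq_integral => w _; rewrite fimfunE.
  rewrite fsbig_finite//= fsbig_finite//= big_distrl/= -sumEFin.
  by apply: eq_bigr => r _; rewrite -!EFinM.
have mIr r : measurable (Z @^-1` (h @^-1` [set r])).
  exact/measurable_preimageT/measurable_funPTI.
rewrite ge0_integral_fsum//; last 2 first.
- move=> r; apply: emeasurable_funM; last exact/measurable_EFinP.
  apply: emeasurable_funM => //; apply/measurable_EFinP.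
  by apply: measurableT_comp => //; exact/measurable_indic/measurable_funPTI.
- move=> r w _; apply: mule_ge0; last by rewrite lee_fin.
  exact: nnfun_muleindic_ge0.
apply: eq_fsbigr => r; rewrite inE => -[z _ <-].
under eq_integral do rewrite -muleA -[X in _ * X]EFinM.
rewrite ge0_integralZl ?lee_fin//.
- rewrite integral_mkcond_indic; congr (_ * _).
  by apply: eq_integral => w _; rewrite mulrC.
- apply/measurable_EFinP/measurable_funM => //.
  by apply: measurableT_comp => //; exact/measurable_indic/measurable_funPTI.
- by move=> w _; rewrite lee_fin mulr_ge0.
Qed.

Variables (a b : T -> R).
Hypotheses (ma : measurable_fun setT a) (mb : measurable_fun setT b).
Hypotheses (a0 : forall w, (0 <= a w)%R) (b0 : forall w, (0 <= b w)%R).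
Hypothesis ab : forall C, measurable C ->
  \int[mu]_(w in Z @^-1` C) (a w)%:E = \int[mu]_(w in Z @^-1` C) (b w)%:E.

Lemma eq_integral_compM (phi : TZ -> R) :
  measurable_fun setT phi -> (forall z, 0 <= phi z)%R ->
  \int[mu]_w (phi (Z w) * a w)%:E = \int[mu]_w (phi (Z w) * b w)%:E.
Proof.
move=> mphi phi0.
have mphiE : measurable_fun setT (EFin \o phi) by exact/measurable_EFinP.
pose h := nnsfun_approx measurableT mphiE.
have limh (c : T -> R) : measurable_fun setT c -> (forall w, 0 <= c w)%R ->
    \int[mu]_w (phi (Z w) * c w)%:E = limn (fun n => \int[mu]_w (h n (Z w) * c w)%:E).
  move=> mc c0; rewrite -monotone_convergence//.
  - apply: eq_integral => w _; apply/esym/cvg_lim => //.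
    rewrite EFinM; under eq_fun do rewrite EFinM.
    apply: cvgeZr => //; apply: cvg_nnsfun_approx => // z _.
    by rewrite lee_fin.
  - move=> n; apply/measurable_EFinP/measurable_funM => //.
    exact: measurableT_comp.
  - by move=> n w _; rewrite lee_fin mulr_ge0.
  - by move=> w _ m n mn; rewrite lee_fin ler_wpM2r//; exact/lefP/nd_nnsfun_approx.
rewrite (limh a)// (limh b)//; congr (limn _); apply/funext => n.
rewrite !integral_nnsfun_compM//; apply: eq_fsbigr => r _; congr (_ * _).
exact/ab/measurable_funPTI.
Qed.

End eq_integral_compM.

Section eq_integral_comp_of_preimages.
Local Open Scope ereal_scope.
Context (R : realType) d (T : measurableType d) (P : probability T R).
Context dz (TZ : measurableType dz) (Z : T -> TZ) (mZ : measurable_fun setT Z).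

Lemma eq_integral_comp_of_preimages (k1 k2 : TZ -> R) :
  measurable_fun setT k1 -> measurable_fun setT k2 ->
  (forall z, 0 <= k1 z <= 1)%R -> (forall z, 0 <= k2 z <= 1)%R ->
  (forall E, measurable E ->
    \int[P]_(w in Z @^-1` E) (k1 (Z w))%:E = \int[P]_(w in Z @^-1` E) (k2 (Z w))%:E) ->
  forall D, measurable D ->
  \int[P]_(w in D) (k1 (Z w))%:E = \int[P]_(w in D) (k2 (Z w))%:E.
Proof.
move=> mk1 mk2 k1_01 k2_01 k12 D mD.
pose Zm : {mfun T >-> TZ} := HB.pack Z (isMeasurableFun.Build _ _ _ _ Z mZ).
pose mu := distribution P Zm.
have mk1E : measurable_fun setT (EFin \o k1) by exact/measurable_EFinP.
have mk2E : measurable_fun setT (EFin \o k2) by exact/measurable_EFinP.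
have k1_int : mu.-integrable setT (EFin \o k1).
  apply/integrableP; split => //; apply: (le_lt_trans _ (ltry 1)).
  have <- : \int[mu]_z (cst 1%:E) z = 1%:E.
    by rewrite integral_cst// mul1e; exact: probability_setT.
  apply: ge0_le_integral => //.
  - exact: measurableT_comp.
  - by move=> z _ /=; rewrite lee_fin ger0_norm; case/andP: (k1_01 z).
have k12_law E : E `<=` setT -> measurable E ->
    \int[mu]_(z in E) (EFin \o k1) z = \int[mu]_(z in E) (EFin \o k2) z.
  move=> _ mE.
  rewrite (ge0_integral_pushforward mZ P (f := EFin \o k1) mE); last 2 first.
  - exact: measurable_funTS.
  - by move=> z _; rewrite lee_fin; case/andP: (k1_01 z).
  rewrite (ge0_integral_pushforward mZ P (f := EFin \o k2) mE); last 2 first.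
  - exact: measurable_funTS.
  - by move=> z _; rewrite lee_fin; case/andP: (k2_01 z).
  exact: k12.
have [N [mN N0 k12N]] := integral_ae_eq measurableT k1_int mk2E k12_law.
apply: ae_eq_integral => //.
- exact/measurable_funTS/measurable_EFinP/measurableT_comp.
- exact/measurable_funTS/measurable_EFinP/measurableT_comp.
exists (Z @^-1` N); split => //; first exact: measurable_preimageT.
by move=> w /= Nw; apply: k12N => /= k12w; apply: Nw => _; exact: k12w.
Qed.

End eq_integral_comp_of_preimages.

Section radon_nikodym_le1.
Local Open Scope ereal_scope.
Context d (T : measurableType d) (R : realType).
Variables nu mu : {finite_measure set T -> \bar R}.
Hypothesis nu_le_mu : forall A, measurable A -> nu A <= mu A.

Lemma radon_nikodym_le1 : exists g : T -> R,
  [/\ measurable_fun setT g, (forall z, 0 <= g z <= 1)%R &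
      forall A, measurable A -> nu A = \int[mu]_(z in A) (g z)%:E].
Proof.
have numu : nu `<< mu.
  apply/null_content_dominatesP => A mA muA.
  by apply/eqP; rewrite eq_le measure_ge0 andbT -muA nu_le_mu.
have [G [G0 intG nuG]] := radon_nikodym_finite numu.
have mG : measurable_fun setT G := measurable_int _ intG.
pose g z := fine (mine (G z) 1%:E).
have gE z : (g z)%:E = mine (G z) 1%:E.
  rewrite fineK// ge0_fin_numE; last by rewrite le_min G0 lee01.
  by apply: (le_lt_trans _ (ltry 1)); rewrite ge_min lexx orbT.
have g01 z : (0 <= g z <= 1)%R.
  by rewrite -!lee_fin gE le_min G0 lee01 ge_min lexx orbT.
have mg : measurable_fun setT g.
  by apply: measurableT_comp; [exact: fine_measurable | exact: measurable_mine].
exists g; split => // A mA.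
(* on [S = {G > 1}], [nu <= mu <= \int G = nu] forces [nu = mu]: the truncation
   [g = 1] is harmless there *)
pose S := [set z | 1%:E < G z].
have mS : measurable S by rewrite -[S]setTI; exact: measurable_lte.
have mAS : measurable (A `&` S) by exact: measurableI.
have mAnS : measurable (A `&` ~` S) by apply: measurableI => //; exact: measurableC.
have AE : A = (A `&` ~` S) `|` (A `&` S) by rewrite -setIUr setUC setUCr setIT.
have nuAS : nu (A `&` S) = mu (A `&` S).
  apply/eqP; rewrite eq_le nu_le_mu//= nuG// -[X in X <= _]mul1e -integral_cst//.
  by apply: ge0_le_integral => //; [exact: measurable_funTS | move=> z [_ /ltW]].
rewrite AE measureU//; last by rewrite setIACA setICl setI0.
rewrite ge0_integral_setU//; first last.
- by apply/disj_setPS => z [[_ nSz] [_ Sz]]; exact: nSz.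
- by move=> z _; rewrite lee_fin; case/andP: (g01 z).
- by rewrite -AE; exact/measurable_funTS/measurable_EFinP.
congr (_ + _).
  transitivity (\int[mu]_(z in A `&` ~` S) G z); first exact: nuG.
  apply: eq_integral => z; rewrite inE => -[_ /negP].
  by rewrite -leNgt gE => GS; rewrite min_l.
transitivity (mu (A `&` S)); first exact: nuAS.
rewrite -[LHS]mul1e -integral_cst//; apply: eq_integral => z.
by rewrite inE => -[_ Sz]; rewrite gE min_r// ltW.
Qed.

End radon_nikodym_le1.

Definition density_pushforward (R : realType) d (T : measurableType d)
    (P : probability T R) dX (X : measurableType dX) (x : {mfun T >-> X})
    (F : T -> R) (mF : measurable_fun setT F) (F01 : forall w, 0 <= F w <= 1)
    (C : set X) : \bar R :=
  (\int[P]_(w in x @^-1` C) (F w)%:E)%E.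

Section density_pushforward.
Local Open Scope ereal_scope.
Context (R : realType) d (T : measurableType d) (P : probability T R).
Context dX (X : measurableType dX) (x : {mfun T >-> X}).
Variables (F : T -> R) (mF : measurable_fun setT F) (F01 : forall w, (0 <= F w <= 1)%R).

Local Notation nu := (density_pushforward P x mF F01).

Let F0 w : (0 <= F w)%R. Proof. by case/andP: (F01 w). Qed.

Let nu0 : nu set0 = 0.
Proof. by rewrite /density_pushforward preimage_set0 integral_set0. Qed.

Let nu_ge0 C : 0 <= nu C.
Proof. by apply: integral_ge0 => w _; rewrite lee_fin. Qed.

Let nu_sigma_additive : semi_sigma_additive nu.
Proof.
move=> G mG tG mUG; rewrite /density_pushforward preimage_bigcup.
apply: semi_sigma_additive_nng_induced.
- exact/measurable_EFinP.
- by move=> w; rewrite lee_fin.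
- by move=> n; exact: measurable_funPTI.
- apply/trivIsetP => /= i j _ _ ij; rewrite -preimage_setI.
  by move/trivIsetP : tG => /(_ _ _ _ _ ij) ->//; rewrite preimage_set0.
- by rewrite -preimage_bigcup; exact: measurable_funPTI.
Qed.

HB.instance Definition _ := isMeasure.Build _ _ _ nu nu0 nu_ge0 nu_sigma_additive.

Lemma density_pushforward_le C : measurable C -> nu C <= distribution P x C.
Proof.
move=> mC; rewrite /density_pushforward /distribution /pushforward.
rewrite -[leRHS]mul1e -integral_cst; last exact: measurable_funPTI.
apply: ge0_le_integral => //; first exact: measurable_funPTI.
- by move=> w _; rewrite lee_fin.
- exact/measurable_funTS/measurable_EFinP.
- by move=> w _; rewrite lee_fin; case/andP: (F01 w).
Qed.

Let nu_fin : fin_num_fun nu.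
Proof.
move=> C mC; rewrite ge0_fin_numE//.
apply: (le_lt_trans (density_pushforward_le mC)).
by apply: (le_lt_trans (probability_le1 _ _)) => //; exact: ltry.
Qed.

HB.instance Definition _ := Measure_isFinite.Build _ _ _ nu nu_fin.

End density_pushforward.

Lemma cond_expectation01 (R : realType) d (T : measurableType d)
    (P : probability T R) dX (X : measurableType dX) (x : T -> X)
    (mx : measurable_fun setT x) (F : T -> R) (mF : measurable_fun setT F)
    (F01 : forall w, 0 <= F w <= 1) :
  exists g : X -> R, [/\ measurable_fun setT g, forall z, 0 <= g z <= 1 &
    forall C, measurable C ->
      (\int[P]_(w in x @^-1` C) (F w)%:E = \int[P]_(w in x @^-1` C) (g (x w))%:E)%E].
Proof.
pose xm : {mfun T >-> X} := HB.pack x (isMeasurableFun.Build _ _ _ _ x mx).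
have [g [mg g01 nuE]] := radon_nikodym_le1 (density_pushforward_le P xm mF F01).
exists g; split => // C mC.
transitivity (density_pushforward P xm mF F01 C); first by [].
rewrite nuE// (ge0_integral_pushforward mx P (f := fun z => (g z)%:E) mC)//.
- exact/measurable_funTS/measurable_EFinP.
- by move=> z _; rewrite lee_fin; case/andP: (g01 z).
Qed.

Section measure_setI_pair_bool.
Local Open Scope ereal_scope.
Context (R : realType) d (T : measurableType d) (mu : {measure set T -> \bar R}).
Context dv (V : measurableType dv) (v : T -> V) (t : T -> bool).
Hypotheses (mv : measurable_fun setT v) (mt : measurable_fun setT t).
Variables (S : set T) (f : V -> R).
Hypotheses (mS : measurable S) (mf : measurable_fun setT f) (f0 : forall z, (0 <= f z)%R).
Hypothesis Sf : forall B D, measurable B -> measurable D ->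
  mu (S `&` t @^-1` B `&` v @^-1` D) =
  \int[mu]_(w in t @^-1` B `&` v @^-1` D) (f (v w))%:E.

Lemma measure_setI_pair_bool E : measurable E ->
  mu (S `&` (fun w => (v w, t w)) @^-1` E) =
  \int[mu]_(w in (fun w => (v w, t w)) @^-1` E) (f (v w))%:E.
Proof.
move=> mE; pose U b := t @^-1` [set b] `&` v @^-1` ysection E b.
have mU b : measurable (U b).
  apply: measurableI; first exact: measurable_preimageT.
  by apply: measurable_preimageT => //; exact: measurable_ysection.
have UE : (fun w => (v w, t w)) @^-1` E = U false `|` U true.
  apply/seteqP; split => w /=; rewrite /U /ysection /=.
  - by case tw: (t w) => Ew; [right|left]; split => //; exact/mem_set.
  - by move=> [[/= <-]|[/= <-]]; rewrite in_setE.
have U0 : U false `&` U true = set0.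
  by apply/seteqP; split => // w [[/= tw0 _] [/= tw1 _]]; rewrite tw0 in tw1.
rewrite UE setIUr measureU//; first last.
- by rewrite setIACA U0 setI0.
- exact: measurableI.
- exact: measurableI.
rewrite ge0_integral_setU//; first last.
- by rewrite /disj_set U0.
- by move=> w _; rewrite lee_fin.
- exact/measurable_funTS/measurable_EFinP/measurableT_comp.
by rewrite !setIA; congr (_ + _); apply: Sf => //; exact: measurable_ysection.
Qed.

End measure_setI_pair_bool.

Section cond_indep_event_integral.
Local Open Scope ereal_scope.
Context (R : realType) d (T : measurableType d) (mu : {measure set T -> \bar R}).
Context dv dx (V : measurableType dv) (X : measurableType dx).
Variables (v : T -> V) (x : T -> X) (S : set T) (f : V -> R) (g h : X -> R).
Hypotheses (mv : measurable_fun setT v) (mx : measurable_fun setT x) (mS : measurable S).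
Hypotheses (mf : measurable_fun setT f) (mg : measurable_fun setT g)
  (mh : measurable_fun setT h).
Hypotheses (f0 : forall z, (0 <= f z)%R) (g0 : forall z, (0 <= g z)%R)
  (h0 : forall z, (0 <= h z)%R).
Hypothesis Sh : forall D C, measurable D -> measurable C ->
  mu (S `&` v @^-1` D `&` x @^-1` C) =
  \int[mu]_(w in v @^-1` D `&` x @^-1` C) (h (x w))%:E.
Hypothesis fg : forall C, measurable C ->
  \int[mu]_(w in x @^-1` C) (f (v w))%:E = \int[mu]_(w in x @^-1` C) (g (x w))%:E.

Lemma cond_indep_event_integral C : measurable C ->
  \int[mu]_(w in S `&` x @^-1` C) (f (v w))%:E =
  \int[mu]_(w in S `&` x @^-1` C) (g (x w))%:E.
Proof.
move=> mC; have mxC := measurable_preimageT mx mC.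
have mIC : measurable_fun setT (\1_C : X -> R) by exact: measurable_indic.
have S_v : \int[mu]_w (f (v w) * \1_(S `&` x @^-1` C) w)%:E =
    \int[mu]_w (f (v w) * (h (x w) * \1_C (x w)))%:E.
  apply: (eq_integral_compM mv) => //.
  - by apply: measurable_indic; exact: measurableI.
  - by apply: measurable_funM; exact: measurableT_comp.
  - by move=> w; rewrite mulr_ge0 ?indic_ge0.
  - move=> D mD; have mvD := measurable_preimageT mv mD.
    rewrite integral_indic//; last exact: measurableI.
    rewrite setIAC Sh//.
    rewrite [LHS]integral_mkcond_indic [RHS]integral_mkcond_indic.
    by apply: eq_integral => w _; rewrite !indicI /=; congr _%:E; ring.
have x_fg : \int[mu]_w (h (x w) * \1_C (x w) * f (v w))%:E =
    \int[mu]_w (h (x w) * \1_C (x w) * g (x w))%:E.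
  apply: (eq_integral_compM (phi := fun z => (h z * \1_C z)%R) mx _ _ _ _ fg) => //.
  - exact: measurableT_comp.
  - exact: measurableT_comp.
  - exact: measurable_funM.
  - by move=> z; rewrite mulr_ge0 ?indic_ge0.
have x_Sh : \int[mu]_w (g (x w) * \1_C (x w) * \1_S w)%:E =
    \int[mu]_w (g (x w) * \1_C (x w) * h (x w))%:E.
  have S_h C' : measurable C' ->
      \int[mu]_(w in x @^-1` C') (\1_S w)%:E =
      \int[mu]_(w in x @^-1` C') (h (x w))%:E.
    move=> mC'; rewrite integral_indic//; last exact: measurable_preimageT.
    by have := Sh measurableT mC'; rewrite preimage_setT setIT setTI.
  apply: (eq_integral_compM (phi := fun z => (g z * \1_C z)%R) mx _ _ _ _ S_h) => //.
  - exact: measurableT_comp.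
  - exact: measurable_funM.
  - by move=> z; rewrite mulr_ge0 ?indic_ge0.
rewrite [LHS]integral_mkcond_indic [RHS]integral_mkcond_indic.
transitivity (\int[mu]_w (h (x w) * \1_C (x w) * f (v w))%:E).
  by rewrite S_v; apply: eq_integral => w _; congr _%:E; ring.
transitivity (\int[mu]_w (g (x w) * \1_C (x w) * h (x w))%:E).
  by rewrite x_fg; apply: eq_integral => w _; congr _%:E; ring.
rewrite -x_Sh; apply: eq_integral => w _.
by rewrite indicI /=; congr _%:E; ring.
Qed.

End cond_indep_event_integral.

Theorem proposition7 (R : realType) (d : measure_display) (Omega : measurableType d)
    (P : probability Omega R)
    (dx dv dy : measure_display) (X : measurableType dx) (V : measurableType dv)
    (Y : measurableType dy)
    (x : Omega -> X) (v : Omega -> V) (t : Omega -> bool) (y : bool -> Omega -> Y)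
    (mx : measurable_fun setT x) (mv : measurable_fun setT v)
    (mt : measurable_fun setT t) (my : forall s, measurable_fun setT (y s)) :
  (* x is a balancing covariate of v:  t _||_ v | x *)
  cond_indep P t v x ->
  (* exchangeability of v:  y(s) _||_ t | v  for both s *)
  (forall s : bool, cond_indep P (y s) t v) ->
  (* y(s) _||_ x | (v, t)  for both s *)
  (forall s : bool, cond_indep P (y s) x (fun w => (v w, t w))) ->
  (* conclusion: exchangeability of x:  y(s) _||_ t | x  for both s *)
  forall s : bool, cond_indep P (y s) t x.
Proof.
move=> t_v_x y_t_v y_x_vt s A mA.
have [f [mf f01 y_f]] := y_t_v s A mA.
have [k [mk k01 y_k]] := y_x_vt s A mA.
have [g [mg g01 f_g]] :=
  cond_expectation01 P mx (measurableT_comp mf mv) (fun w => f01 (v w)).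
exists g; split => // B C mB mC.
have [h [mh h01 t_h]] := t_v_x B mB.
pose vt w := (v w, t w).
have mvt : measurable_fun setT vt := measurable_fun_pair mv mt.
have k_f E : measurable E ->
    (\int[P]_(w in vt @^-1` E) (k (vt w))%:E =
     \int[P]_(w in vt @^-1` E) (f (vt w).1)%:E)%E.
  move=> mE; have := y_k setT E measurableT mE.
  rewrite preimage_setT setIT setTI => <-.
  apply: measure_setI_pair_bool => //; first exact: measurable_preimageT.
  by move=> z; case/andP: (f01 z).
have -> : y s @^-1` A `&` t @^-1` B `&` x @^-1` C =
    y s @^-1` A `&` x @^-1` C `&` vt @^-1` (setT `*` B).
  by apply/seteqP; split => w /=; [move=> [[]]|move=> [[? ?] [_ ?]]].
rewrite y_k//; last exact: measurableX.
rewrite (eq_integral_comp_of_preimages mvt mk (measurableT_comp mf measurable_fst)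
  k01 (fun z => f01 z.1) k_f); last first.
  apply: measurableI; first exact: measurable_preimageT.
  by apply: measurable_preimageT => //; exact: measurableX.
have -> : x @^-1` C `&` vt @^-1` (setT `*` B) = t @^-1` B `&` x @^-1` C.
  by apply/seteqP; split => w /=; [move=> [? [_ ?]]|move=> [? ?]].
have f0 z : 0 <= f z by case/andP: (f01 z).
have g0 z : 0 <= g z by case/andP: (g01 z).
have h0 z : 0 <= h z by case/andP: (h01 z).
exact: (cond_indep_event_integral mv mx (measurable_preimageT mt mB) mf mg mh
  f0 g0 h0 t_h f_g).
Qed.
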